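(* (i) $(\mathcal{T}_2,=)\models\exists\mathsf{x}[\neg D(\mathsf{x})\wedge\forall\mathsf{y}[AP(\mathsf{x},\mathsf{y})\rightarrow D(\mathsf{y})]]$. (ii) For every $\beta$ with $Spr(\beta)$, if $(\mathcal{F}_\beta,=)\models\exists\mathsf{x}[\neg D(\mathsf{x})\wedge\forall\mathsf{y}[AP(\mathsf{x},\mathsf{y})\rightarrow D(\mathsf{y})]]$, then $\mathcal{F}_\beta$ embeds into $\mathcal{T}_2$.
   Context: Intuitionistic mathematics (constructive reading of logical constants; Markov's Principle not assumed). Axioms assumed: Brouwer's Continuity Principle (for every $R\subseteq\mathcal{N}\times\omega$, if $\forall\alpha\exists n[\alpha Rn]$ then $\forall\alpha\exists m\exists n\forall\beta[\overline{\alpha}m\sqsubset\beta\rightarrow\beta Rn]$); the First Axiom of Continuous Choice (for every $R\subseteq\mathcal{N}\times\omega$, if $\forall\alpha\exists n[\alpha Rn]$ then there is $\varphi:\mathcal{N}\rightarrow\omega$ in the sense below with $\forall\alpha[\alpha R\varphi(\alpha)]$); and the Second Axiom of Countable Choice (for every $R\subseteq\mathbb{N}\times\mathcal{N}$, if $\forall n\exists\alpha[nR\alpha]$ then $\exists\alpha\forall n[nR\alpha^n]$). Notation: $\mathcal{N}=\omega^\omega$; finite sequences coded by naturals; $\overline{\alpha}p=\langle\alpha(0),\dots,\alpha(p-1)\rangle$; $J$ a fixed pairing bijection $\omega\times\omega\to\omega$ and $\alpha^n(m):=\alpha(J(n,m))$. $\mathcal{F}_\beta:=\{\alpha\mid\forall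 n[\beta(\overline{\alpha}n)=0]\}$; $Spr(\beta)$ iff $\forall s[\beta(s)=0\leftrightarrow\exists n[\beta(s\ast\langle n\rangle)=0]]$. $\mathcal{T}_2:=\{\alpha\mid\forall i[\alpha(i)\le\alpha(i+1)<2]\}$. Formulas: $D(\mathsf{x}):=\forall\mathsf{y}[\mathsf{x}=\mathsf{y}\vee\neg(\mathsf{x}=\mathsf{y})]$, $AP(\mathsf{x},\mathsf{y}):=\forall\mathsf{z}[\neg(\mathsf{z}=\mathsf{x})\vee\neg(\mathsf{z}=\mathsf{y})]$; satisfaction read intuitionistically with $=$ interpreted as equality of sequences. For $\varphi\in\mathcal{N}$: $\varphi:\mathcal{F}_\beta\rightarrow\omega$ iff $\forall\alpha\in\mathcal{F}_\beta\exists p[\varphi(\overline{\alpha}p)\neq0]$, with $\varphi(\alpha):=\varphi(\overline{\alpha}q)-1$ for the least such $q$; $\varphi:\mathcal{F}_\beta\rightarrow\mathcal{N}$ iff $\forall n[\varphi^n:\mathcal{F}_\beta\rightarrow\omega]$, and then $\varphi|\alpha$ is the sequence $n\mapsto\varphi^n(\alpha)$; $\varphi$ is injective iff $\forall\alpha,\delta\in\mathcal{F}_\beta[\alpha\#\delta\rightarrow\varphi|\alpha\#\varphi|\delta]$, where $\alpha\#\delta$ means $\exists n[\alpha(n)\neq\delta(n)]$. $\mathcal{F}_\beta$ embeds into $X\subseteq\mathcal{N}$ iff there is an injective $\varphi:\mathcal{F}_\beta\rightarrow\mathcal{N}$ with $\varphi|\alpha\in X$ for all $\alpha\in\mathcal{F}_\beta$.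 *)

From Stdlib Require Import List Arith.
Import ListNotations.

Definition baire := nat -> nat.

(* Finite sequences are represented directly as lists of naturals
   (instead of via a numerical coding). *)
Fixpoint prefix (a : baire) (n : nat) : list nat :=
  match n with
  | 0 => []
  | S k => prefix a k ++ [a k]
  end.

Definition initseg (s : list nat) (b : baire) : Prop :=
  prefix b (length s) = s.

Definition J (n m : nat) : nat := (n + m) * (n + m + 1) / 2 + m.

Definition sub (a : baire) (n : nat) : baire := fun m => a (J n m).

Definition seq_eq (a b : baire) : Prop := forall n, a n = b n.
Definition apart (a b : baire) : Prop := exists n, a n <> b n.

Definition inF (beta : list nat -> nat) (a : baire) : Prop :=
  forall n, beta (prefix a n) = 0.
Definition Spr (beta : list nat -> nat) : Prop :=
  forall s, beta s = 0 <-> exists n, beta (s ++ [n]) = 0.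
Definition inT2 (a : baire) : Prop :=
  forall i, a i <= a (S i) /\ a (S i) < 2.

Definition Dx (X : baire -> Prop) (x : baire) : Prop :=
  forall y, X y -> seq_eq x y \/ ~ seq_eq x y.
Definition APx (X : baire -> Prop) (x y : baire) : Prop :=
  forall z, X z -> ~ seq_eq z x \/ ~ seq_eq z y.
Definition models_sentence (X : baire -> Prop) : Prop :=
  exists x, X x /\ ~ Dx X x /\ (forall y, X y -> APx X x y -> Dx X y).

Definition fval (phi : list nat -> nat) (a : baire) (k : nat) : Prop :=
  exists q, phi (prefix a q) <> 0 /\
            (forall q', q' < q -> phi (prefix a q') = 0) /\
            k = phi (prefix a q) - 1.

Definition is_fun_to_nat (beta : list nat -> nat) (phi : list nat -> nat) : Prop :=
  forall a, inF beta a -> exists p, phi (prefix a p) <> 0.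

(* phi : F_beta -> N, with phi n playing the role of phi^n *)
Definition is_fun_to_baire (beta : list nat -> nat) (phi : nat -> list nat -> nat) : Prop :=
  forall n, is_fun_to_nat beta (phi n).

Definition restr_is (phi : nat -> list nat -> nat) (a g : baire) : Prop :=
  forall n, fval (phi n) a (g n).

Definition embeds (beta : list nat -> nat) (X : baire -> Prop) : Prop :=
  exists phi : nat -> list nat -> nat,
    is_fun_to_baire beta phi /\
    (forall a d g h, inF beta a -> inF beta d ->
       restr_is phi a g -> restr_is phi d h -> apart a d -> apart g h) /\
    (forall a, inF beta a -> exists g, restr_is phi a g /\ X g).

Definition BCP : Prop :=
  forall R : baire -> nat -> Prop,
    (forall a, exists n, R a n) ->
    forall a, exists m n, forall b, initseg (prefix a m) b -> R b n.

Definition AC10 : Prop :=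
  forall R : baire -> nat -> Prop,
    (forall a, exists n, R a n) ->
    exists phi : list nat -> nat,
      is_fun_to_nat (fun _ => 0) phi /\
      (forall a k, fval phi a k -> R a k).

Definition AC01 : Prop :=
  forall R : nat -> baire -> Prop,
    (forall n, exists a, R n a) -> exists a, forall n, R n (sub a n).

From Stdlib Require Import List Arith Lia Bool Cantor ConstructiveEpsilon.
Import ListNotations.

(** (i) The zero sequence 0 of T2 is not decidable: the point of T2 that jumps
    to 1 as soon as an argument a leaves 0 depends continuously on a, so by
    Brouwer's principle "equal to 0" would be constant near a = 0, which it is
    not.  A point y apart from 0 is decidable: freezing y at the moment a
    leaves 0 gives points each of which is either unequal to 0 or unequal to y;
    continuity at a = 0 forces the first alternative near 0, which is only
    possible if y already takes the value 1 somewhere, and a point of T2 known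
    to contain a 1 is decidable.

    (ii) Every point of F_beta apart from x is decidable, hence (by continuity,
    transported to F_beta along a retraction of Baire space onto the spread)
    isolated.  Continuous choice yields psi which, given p and a, returns 0 if
    a agrees with x below p, and otherwise 1 + a modulus of isolation of a.
    Send a to the point of T2 that jumps to 1 at the first number K coding a
    certificate: p, the time at which psi answers, the modulus m, and the
    prefix of a of length m.  If a # d, one of them is apart from x and has a
    certificate; the other cannot jump at the same K, since it would then share
    an isolating prefix with it. *)

Lemma prefix_length a n : length (prefix a n) = n.
Proof. induction n as [|n IH]; [reflexivity|]. simpl. rewrite length_app, IH. simpl. lia. Qed.

Lemma prefix_nth a n i d : i < n -> nth i (prefix a n) d = a i.
Proof.
  induction n as [|n IH]; intros Hi; [lia|]. simpl.
  destruct (Nat.eq_dec i n) as [->|Hin].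
  - rewrite app_nth2; rewrite prefix_length; [|lia]. now rewrite Nat.sub_diag.
  - rewrite app_nth1; [apply IH; lia|rewrite prefix_length; lia].
Qed.

Lemma prefix_ext a b n : (forall i, i < n -> a i = b i) -> prefix a n = prefix b n.
Proof.
  induction n as [|n IH]; intros Hab; [reflexivity|]. simpl.
  rewrite IH, (Hab n); [reflexivity|lia|]. intros i Hi. apply Hab. lia.
Qed.

Lemma prefix_eq_agree a b n : prefix a n = prefix b n -> forall i, i < n -> a i = b i.
Proof. intros E i Hi. now rewrite <- (prefix_nth a n i 0 Hi), <- (prefix_nth b n i 0 Hi), E. Qed.

Lemma prefix_eq_le a b m n : m <= n -> prefix a n = prefix b n -> prefix a m = prefix b m.
Proof. intros Hmn E. apply prefix_ext. intros i Hi. apply (prefix_eq_agree _ _ _ E). lia. Qed.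

Lemma prefix_neq a b n : prefix a n <> prefix b n -> exists i, i < n /\ a i <> b i.
Proof.
  induction n as [|n IH]; intros Hne; [contradiction|].
  destruct (Nat.eq_dec (a n) (b n)) as [E|E].
  - destruct IH as [i [Hi Hab]].
    + intros Ep. apply Hne. simpl. now rewrite Ep, E.
    + exists i. split; [lia|exact Hab].
  - exists n. split; [lia|exact E].
Qed.

Lemma initseg_prefix a b m : initseg (prefix a m) b <-> prefix b m = prefix a m.
Proof. unfold initseg. now rewrite prefix_length. Qed.

Lemma apart_sym a b : apart a b -> apart b a.
Proof. intros [i Hi]. exists i. auto. Qed.

Lemma APx_of_apart X x y : apart x y -> APx X x y.
Proof.
  intros [i Hi] z _. destruct (Nat.eq_dec (z i) (x i)) as [E|E].
  - right. intros Ezy. apply Hi. rewrite <- E. exact (Ezy i).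
  - left. intros Ezx. exact (E (Ezx i)).
Qed.

Fixpoint bexists (n : nat) (f : nat -> bool) : bool :=
  match n with
  | 0 => false
  | S n => bexists n f || f n
  end.

Lemma bexists_spec n f : bexists n f = true <-> exists i, i < n /\ f i = true.
Proof.
  induction n as [|n IH]; simpl.
  - split; [discriminate|]. intros [i [Hi _]]. lia.
  - rewrite orb_true_iff, IH. split.
    + intros [[i [Hi Hf]]|Hf]; [exists i|exists n]; split; auto; lia.
    + intros [i [Hi Hf]]. destruct (Nat.eq_dec i n) as [->|Hin]; [now right|].
      left. exists i. split; [lia|exact Hf].
Qed.

Lemma bexists_false n f : bexists n f = false <-> forall i, i < n -> f i = false.
Proof.
  split.
  - intros E i Hi. destruct (f i) eqn:Fi; [|reflexivity].
    rewrite <- E. symmetry. apply bexists_spec. eauto.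
  - intros Hf. destruct (bexists n f) eqn:E; [|reflexivity].
    apply bexists_spec in E as [i [Hi Fi]]. now rewrite Hf in Fi.
Qed.

Lemma bexists_ext n f g : (forall i, i < n -> f i = g i) -> bexists n f = bexists n g.
Proof.
  induction n as [|n IH]; intros Hfg; [reflexivity|]. simpl.
  rewrite IH, (Hfg n); [reflexivity|lia|]. intros i Hi. apply Hfg. lia.
Qed.

Lemma least_true (f : nat -> bool) n : f n = true -> exists k, f k = true /\ bexists k f = false.
Proof.
  induction n as [n IH] using lt_wf_ind. intros Hn.
  destruct (bexists n f) eqn:E.
  - apply bexists_spec in E as [i [Hi Hf]]. exact (IH i Hi Hf).
  - now exists n.
Qed.

Definition hit (f : nat -> bool) : baire := fun n => if bexists (S n) f then 1 else 0.

Definition zero : baire := fun _ => 0.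

Lemma hit_T2 f : inT2 (hit f).
Proof. intros i. unfold hit. simpl. destruct (bexists i f), (f i), (f (S i)); simpl; lia. Qed.

Lemma hit_false f : (forall i, f i = false) -> seq_eq (hit f) zero.
Proof. intros Hf n. unfold hit. now rewrite (proj2 (bexists_false _ _) (fun i _ => Hf i)). Qed.

Lemma hit_apart f g :
  (exists K, f K = true) -> (forall K, f K = true -> g K = true -> False) ->
  apart (hit f) (hit g).
Proof.
  intros [K0 HK0] Hfg. destruct (least_true f K0 HK0) as [K [HK Hbefore]].
  unfold hit. destruct (bexists K g) eqn:EgK.
  - apply bexists_spec in EgK as [j [Hj Hg]]. exists j.
    rewrite (proj2 (bexists_false (S j) f)).
    + simpl. now rewrite Hg, orb_true_r.
    + intros i Hi. apply (proj1 (bexists_false K f) Hbefore). lia.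
  - exists K. simpl. rewrite Hbefore, EgK, HK. simpl.
    destruct (g K) eqn:GK; [exfalso; eauto|discriminate].
Qed.

Lemma T2_lt2 y : inT2 y -> forall i, y i < 2.
Proof. intros Hy [|i]; [destruct (Hy 0); lia|apply Hy]. Qed.

Lemma T2_mono y : inT2 y -> forall i j, i <= j -> y i <= y j.
Proof. intros Hy i j Hij. induction Hij as [|j _ IH]; [reflexivity|]. specialize (Hy j). lia. Qed.

Lemma T2_one_after y i n : inT2 y -> y i = 1 -> i <= n -> y n = 1.
Proof. intros Hy Hi Hin. pose proof (T2_mono y Hy i n Hin). pose proof (T2_lt2 y Hy n). lia. Qed.

Lemma T2_zero : inT2 zero.
Proof. intros i. unfold zero. lia. Qed.

Lemma hit_of_T2 y : inT2 y -> seq_eq (hit (fun i => y i =? 1)) y.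
Proof.
  intros Hy n. unfold hit. destruct (bexists (S n) _) eqn:E.
  - apply bexists_spec in E as [i [Hi Hyi]]. apply Nat.eqb_eq in Hyi.
    symmetry. apply (T2_one_after y i n Hy Hyi). lia.
  - pose proof (proj1 (bexists_false _ _) E n (le_n _)) as Hyn. apply Nat.eqb_neq in Hyn.
    pose proof (T2_lt2 y Hy n). lia.
Qed.

Lemma T2_decidable_of_one y i : inT2 y -> y i = 1 -> Dx inT2 y.
Proof.
  intros Hy Hi w Hw.
  destruct (list_eq_dec Nat.eq_dec (prefix y (S i)) (prefix w (S i))) as [E|E].
  - left. intros n. destruct (le_lt_dec n i) as [Hn|Hn].
    + apply (prefix_eq_agree _ _ _ E). lia.
    + assert (Hwi : w i = 1) by (rewrite <- (prefix_eq_agree _ _ _ E i); auto).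
      rewrite (T2_one_after y i n), (T2_one_after w i n); auto; lia.
  - right. intros Eyw. apply E, prefix_ext. intros j _. apply Eyw.
Qed.

Lemma bcp_disjunction (bcp : BCP) (P Q : baire -> Prop) :
  (forall a, P a \/ Q a) ->
  forall a, exists m,
    (forall b, prefix b m = prefix a m -> P b) \/ (forall b, prefix b m = prefix a m -> Q b).
Proof.
  intros HPQ a.
  destruct (bcp (fun b n => match n with 0 => P b | S _ => Q b end)) with (a := a)
    as [m [n Hm]].
  { intros b. destruct (HPQ b); [exists 0|exists 1]; assumption. }
  exists m. destruct n; [left|right]; intros b Hb; apply (Hm b), initseg_prefix, Hb.
Qed.

Definition step_at (m : nat) : baire := fun i => if i <? m then 0 else 1.

Lemma prefix_step_at m : prefix (step_at m) m = prefix zero m.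
Proof. apply prefix_ext. intros i Hi. unfold step_at. now rewrite (proj2 (Nat.ltb_lt i m) Hi). Qed.

Definition flag (a : baire) : baire := hit (fun i => negb (a i =? 0)).

Lemma flag_zero : seq_eq (flag zero) zero.
Proof. now apply hit_false. Qed.

Lemma flag_one a i : a i <> 0 -> flag a i = 1.
Proof.
  intros Hai. unfold flag, hit. rewrite (proj2 (bexists_spec _ _)); [reflexivity|].
  exists i. split; [lia|]. now apply negb_true_iff, Nat.eqb_neq.
Qed.

Lemma zero_not_decidable (bcp : BCP) : ~ Dx inT2 zero.
Proof.
  intros Dz.
  destruct (bcp_disjunction bcp (fun a => seq_eq zero (flag a))
              (fun a => ~ seq_eq zero (flag a))) with (a := zero) as [m [Hnear|Hnear]].
  { intros a. apply Dz, hit_T2. }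
  - specialize (Hnear (step_at m) (prefix_step_at m) m).
    rewrite flag_one in Hnear; [discriminate|].
    unfold step_at. now rewrite Nat.ltb_irrefl.
  - apply (Hnear zero eq_refl). intros n. symmetry. apply flag_zero.
Qed.

(** [freeze y a] follows [y] as long as [a] is 0 and then stays constant. *)
Definition freeze (y a : baire) : baire := hit (fun i => (flag a i =? 0) && (y i =? 1)).

Lemma freeze_zero y : inT2 y -> seq_eq (freeze y zero) y.
Proof.
  intros Hy n. rewrite <- (hit_of_T2 y Hy n). unfold freeze, hit.
  rewrite (bexists_ext _ _ (fun i => y i =? 1)); [reflexivity|].
  intros i _. now rewrite (flag_zero i).
Qed.

Lemma freeze_step_at y m :
  bexists m (fun i => y i =? 1) = false -> seq_eq (freeze y (step_at m)) zero.
Proof.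
  intros Hy. apply hit_false. intros i. destruct (Nat.lt_ge_cases i m) as [Him|Him].
  - rewrite (proj1 (bexists_false _ _) Hy i Him). apply andb_false_r.
  - rewrite flag_one; [reflexivity|]. unfold step_at. now rewrite (proj2 (Nat.ltb_ge i m) Him).
Qed.

Lemma apart_zero_decidable (bcp : BCP) y : inT2 y -> APx inT2 zero y -> Dx inT2 y.
Proof.
  intros Hy Hap.
  destruct (bcp_disjunction bcp (fun a => ~ seq_eq (freeze y a) zero)
              (fun a => ~ seq_eq (freeze y a) y)) with (a := zero) as [m [Hnear|Hnear]].
  { intros a. apply Hap, hit_T2. }
  - destruct (bexists m (fun i => y i =? 1)) eqn:E.
    + apply bexists_spec in E as [i [_ Hi]]. apply Nat.eqb_eq in Hi.
      exact (T2_decidable_of_one y i Hy Hi).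
    + exfalso. apply (Hnear (step_at m) (prefix_step_at m)), freeze_step_at, E.
  - exfalso. apply (Hnear zero eq_refl), freeze_zero, Hy.
Qed.

Lemma T2_models_sentence (bcp : BCP) : models_sentence inT2.
Proof.
  exists zero. split; [exact T2_zero|split].
  - exact (zero_not_decidable bcp).
  - exact (apart_zero_decidable bcp).
Qed.

Definition causal (F : baire -> baire) : Prop :=
  forall a b n, prefix a n = prefix b n -> F a n = F b n.

Definition of_list (s : list nat) : baire := fun i => nth i s 0.

(** Coordinate [n] of [F a] is read off the prefix of length [n]; the value 0
    on all other prefixes means "undecided". *)
Definition causal_code (F : baire -> baire) (n : nat) (s : list nat) : nat :=
  if length s =? n then S (F (of_list s) n) else 0.

Lemma causal_code_prefix F a n : causal F -> causal_code F n (prefix a n) = S (F a n).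
Proof.
  intros HF. unfold causal_code. rewrite prefix_length, Nat.eqb_refl. f_equal.
  apply HF, prefix_ext. intros i Hi. apply prefix_nth, Hi.
Qed.

Lemma fval_causal_code F a n k : causal F -> fval (causal_code F n) a k <-> k = F a n.
Proof.
  intros HF. split.
  - intros [q [Hq [_ ->]]]. unfold causal_code at 1 in Hq. rewrite prefix_length in Hq.
    destruct (Nat.eqb_spec q n) as [Eq|]; [subst q|contradiction].
    rewrite causal_code_prefix by exact HF. lia.
  - intros ->. exists n. rewrite causal_code_prefix by exact HF.
    split; [discriminate|split; [|lia]].
    intros q Hq. unfold causal_code. rewrite prefix_length.
    destruct (Nat.eqb_spec q n); [lia|reflexivity].
Qed.

Lemma embeds_of_causal beta X F :
  causal F -> (forall a, inF beta a -> X (F a)) ->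
  (forall a d, inF beta a -> inF beta d -> apart a d -> apart (F a) (F d)) ->
  embeds beta X.
Proof.
  intros HF HX Hinj. exists (causal_code F). split; [|split].
  - intros n a _. exists n. now rewrite causal_code_prefix.
  - intros a d g h Ha Hd Hg Hh Had. destruct (Hinj a d Ha Hd Had) as [n Hn]. exists n.
    now rewrite (proj1 (fval_causal_code F a n _ HF) (Hg n)),
                (proj1 (fval_causal_code F d n _ HF) (Hh n)).
  - intros a Ha. exists (F a). split; [intros n; now apply fval_causal_code|auto].
Qed.

Lemma hit_causal (f : baire -> nat -> bool) :
  (forall a b K, prefix a K = prefix b K -> f a K = f b K) -> causal (fun a => hit (f a)).
Proof.
  intros Hf a b n E. unfold hit.
  rewrite (bexists_ext (S n) (f a) (f b)); [reflexivity|].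
  intros K HK. apply Hf, (prefix_eq_le _ _ _ n); [lia|exact E].
Qed.

Section Retraction.

Variable beta : list nat -> nat.
Hypothesis beta_spread : Spr beta.
Hypothesis beta_nil : beta [] = 0.

Definition node : Type := {s : list nat | beta s = 0}.

Definition some_child (s : node) : nat :=
  proj1_sig (constructive_indefinite_ground_description_nat
    (fun k => beta (proj1_sig s ++ [k]) = 0) (fun k => Nat.eq_dec _ 0)
    (proj1 (beta_spread _) (proj2_sig s))).

Definition child (s : node) (k : nat) : nat :=
  if beta (proj1_sig s ++ [k]) =? 0 then k else some_child s.

Lemma child_spec s k : beta (proj1_sig s ++ [child s k]) = 0.
Proof.
  unfold child. destruct (Nat.eqb_spec (beta (proj1_sig s ++ [k])) 0) as [E|_]; [exact E|].
  unfold some_child. now destruct constructive_indefinite_ground_description_nat.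
Qed.

Fixpoint retract_node (a : baire) (n : nat) : node :=
  match n with
  | 0 => exist _ [] beta_nil
  | S n => let s := retract_node a n in
           exist _ (proj1_sig s ++ [child s (a n)]) (child_spec s (a n))
  end.

Definition retract (a : baire) : baire := fun n => child (retract_node a n) (a n).

Lemma prefix_retract a n : prefix (retract a) n = proj1_sig (retract_node a n).
Proof. induction n as [|n IH]; [reflexivity|]. simpl. now rewrite IH. Qed.

Lemma retract_inF a : inF beta (retract a).
Proof. intros n. rewrite prefix_retract. apply proj2_sig. Qed.

Lemma retract_fixes a : inF beta a -> seq_eq (retract a) a.
Proof.
  intros Ha.
  assert (Hpre : forall n, prefix (retract a) n = prefix a n).
  { induction n as [|n IH]; [reflexivity|]. simpl. rewrite IH. do 2 f_equal.
    unfold retract, child. rewrite <- (prefix_retract a n), IH.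
    change (prefix a n ++ [a n]) with (prefix a (S n)). now rewrite (Ha (S n)). }
  intros n. apply (prefix_eq_agree _ _ (S n) (Hpre (S n))). lia.
Qed.

Definition isolated (g : baire) (m : nat) : Prop :=
  forall w, inF beta w -> prefix w m = prefix g m -> seq_eq w g.

Lemma isolated_ext g g' m : seq_eq g g' -> isolated g m -> isolated g' m.
Proof.
  intros E Hg w Hw Hwm. assert (Hwg : seq_eq w g).
  { apply Hg; auto. rewrite Hwm. apply prefix_ext. intros i _. symmetry. apply E. }
  intros n. now rewrite Hwg.
Qed.

Lemma decidable_isolated (bcp : BCP) g :
  inF beta g -> Dx (inF beta) g -> exists m, isolated g m.
Proof.
  intros Hg Dg.
  destruct (bcp_disjunction bcp (fun d => seq_eq g (retract d))
              (fun d => ~ seq_eq g (retract d))) with (a := g) as [m [Hnear|Hnear]].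
  { intros d. apply Dg, retract_inF. }
  - exists m. intros w Hw Hwm n.
    rewrite <- (retract_fixes w Hw n). symmetry. exact (Hnear w Hwm n).
  - exfalso. apply (Hnear g eq_refl). intros n. symmetry. apply retract_fixes, Hg.
Qed.

End Retraction.

Definition scons (p : nat) (a : baire) : baire :=
  fun n => match n with 0 => p | S k => a k end.

Definition tail (c : baire) : baire := fun n => c (S n).

Definition first_nonzero (psi : list nat -> nat) (c : baire) (t : nat) : bool :=
  negb (psi (prefix c t) =? 0) && negb (bexists t (fun t' => negb (psi (prefix c t') =? 0))).

Lemma fval_first_nonzero psi c t :
  first_nonzero psi c t = true -> fval psi c (psi (prefix c t) - 1).
Proof.
  unfold first_nonzero. rewrite andb_true_iff, !negb_true_iff. intros [Hnz Hbefore].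
  exists t. split; [now apply Nat.eqb_neq|split; [|reflexivity]].
  intros t' Ht'. apply Nat.eqb_eq, negb_false_iff, (proj1 (bexists_false _ _) Hbefore t' Ht').
Qed.

Lemma first_nonzero_exists psi c t :
  psi (prefix c t) <> 0 -> exists t', first_nonzero psi c t' = true.
Proof.
  intros Ht. destruct (least_true (fun t => negb (psi (prefix c t) =? 0)) t) as [t' [H1 H2]].
  - now apply negb_true_iff, Nat.eqb_neq.
  - exists t'. unfold first_nonzero. now rewrite H1, H2.
Qed.

Lemma first_nonzero_causal psi c c' t :
  prefix c t = prefix c' t -> first_nonzero psi c t = first_nonzero psi c' t.
Proof.
  intros E. unfold first_nonzero. rewrite E. do 2 f_equal.
  apply bexists_ext. intros t' Ht'. now rewrite (prefix_eq_le c c' t' t) by (lia || exact E).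
Qed.

Fixpoint list_code (s : list nat) : nat :=
  match s with
  | [] => 0
  | a :: s => S (to_nat (a, list_code s))
  end.

Lemma to_nat_inj p q : to_nat p = to_nat q -> p = q.
Proof. intros E. now rewrite <- (cancel_of_to p), <- (cancel_of_to q), E. Qed.

Lemma list_code_inj s s' : list_code s = list_code s' -> s = s'.
Proof.
  revert s'. induction s as [|a s IH]; intros [|a' s'] E; try discriminate; [reflexivity|].
  apply Nat.succ_inj, to_nat_inj in E. injection E as -> E. now rewrite (IH s' E).
Qed.

Lemma length_le_list_code s : length s <= list_code s.
Proof.
  induction s as [|a s IH]; simpl; [lia|].
  pose proof (to_nat_non_decreasing a (list_code s)). lia.
Qed.

Definition certificate_code (a : baire) (p t m : nat) : nat :=
  to_nat (list_code (prefix a m), to_nat (p, t)).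

Lemma certificate_code_bound a p t m :
  p <= certificate_code a p t m /\ t <= certificate_code a p t m /\ m <= certificate_code a p t m.
Proof.
  unfold certificate_code.
  pose proof (to_nat_non_decreasing (list_code (prefix a m)) (to_nat (p, t))).
  pose proof (to_nat_non_decreasing p t). pose proof (length_le_list_code (prefix a m)).
  rewrite prefix_length in *. lia.
Qed.

Lemma certificate_code_inj a d p t m p' t' m' :
  certificate_code a p t m = certificate_code d p' t' m' -> m = m' /\ prefix a m = prefix d m.
Proof.
  unfold certificate_code. intros E. apply to_nat_inj in E. injection E as Es _.
  apply list_code_inj in Es.
  assert (Em : m = m') by now rewrite <- (prefix_length a m), <- (prefix_length d m'), Es.
  subst m'. now split.
Qed.

Section Embedding.

Variable beta : list nat -> nat.
Hypothesis beta_spread : Spr beta.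
Variable x : baire.
Hypothesis x_inF : inF beta x.
Hypothesis apart_x_decidable :
  forall y, inF beta y -> APx (inF beta) x y -> Dx (inF beta) y.
Hypothesis bcp : BCP.

Local Notation retr := (retract beta beta_spread (x_inF 0)).

(** [c] is read as the pair [(c 0, tail c)]. *)
Definition modulus_choice (c : baire) (k : nat) : Prop :=
  match k with
  | 0 => prefix (retr (tail c)) (c 0) = prefix x (c 0)
  | S m => isolated beta (retr (tail c)) m
  end.

Lemma modulus_choice_total c : exists k, modulus_choice c k.
Proof.
  set (g := retr (tail c)).
  destruct (list_eq_dec Nat.eq_dec (prefix g (c 0)) (prefix x (c 0))) as [E|E].
  - now exists 0.
  - destruct (prefix_neq _ _ _ E) as [i [_ Hi]].
    assert (Hg : inF beta g) by apply retract_inF.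
    assert (Hap : APx (inF beta) x g) by (apply APx_of_apart; exists i; auto).
    destruct (decidable_isolated beta beta_spread (x_inF 0) bcp g Hg
                (apart_x_decidable g Hg Hap)) as [m Hm].
    now exists (S m).
Qed.

Variable psi : list nat -> nat.
Hypothesis psi_total : is_fun_to_nat (fun _ => 0) psi.
Hypothesis psi_spec : forall c k, fval psi c k -> modulus_choice c k.

Definition is_certificate (a : baire) (K : nat) : bool :=
  bexists (S K) (fun p => bexists (S K) (fun t => bexists (S K) (fun m =>
    (K =? certificate_code a p t m) && first_nonzero psi (scons p a) t
    && (psi (prefix (scons p a) t) =? S (S m))))).

Lemma is_certificate_spec a K :
  is_certificate a K = true <->
  exists p t m, K = certificate_code a p t m /\ first_nonzero psi (scons p a) t = true /\
                psi (prefix (scons p a) t) = S (S m).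
Proof.
  unfold is_certificate. split.
  - intros H. apply bexists_spec in H as [p [_ H]]. apply bexists_spec in H as [t [_ H]].
    apply bexists_spec in H as [m [_ H]].
    rewrite !andb_true_iff, !Nat.eqb_eq in H. destruct H as [[HK HF] HV].
    now exists p, t, m.
  - intros [p [t [m [HK [HF HV]]]]]. subst K.
    destruct (certificate_code_bound a p t m) as [Hp [Ht Hm]].
    apply bexists_spec. exists p. split; [lia|].
    apply bexists_spec. exists t. split; [lia|].
    apply bexists_spec. exists m. split; [lia|].
    now rewrite HF, HV, !Nat.eqb_refl.
Qed.

Lemma is_certificate_causal a b K :
  prefix a K = prefix b K -> is_certificate a K = is_certificate b K.
Proof.
  intros E. unfold is_certificate.
  apply bexists_ext. intros p _. apply bexists_ext. intros t Ht. apply bexists_ext. intros m Hm.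
  assert (Em : prefix a m = prefix b m) by (apply (prefix_eq_le _ _ _ K); [lia|exact E]).
  assert (Et : prefix (scons p a) t = prefix (scons p b) t).
  { apply prefix_ext. intros [|i] Hi; [reflexivity|]. apply (prefix_eq_agree _ _ _ E). lia. }
  unfold certificate_code. now rewrite Em, Et, (first_nonzero_causal psi _ _ t Et).
Qed.

Lemma certificate_unique a d K :
  inF beta a -> inF beta d -> is_certificate a K = true -> is_certificate d K = true ->
  seq_eq d a.
Proof.
  intros Ha Hd Ca Cd.
  apply is_certificate_spec in Ca as [p [t [m [Ka [Fa Va]]]]].
  apply is_certificate_spec in Cd as [p' [t' [m' [Kd _]]]].
  rewrite Ka in Kd. apply certificate_code_inj in Kd as [<- Em].
  assert (Hiso : isolated beta a m).
  { apply (isolated_ext beta (retr a)); [now apply retract_fixes|].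
    pose proof (fval_first_nonzero psi _ _ Fa) as Hf. rewrite Va in Hf.
    exact (psi_spec _ _ Hf). }
  exact (Hiso d Hd (eq_sym Em)).
Qed.

Lemma certificate_exists a i : inF beta a -> a i <> x i -> exists K, is_certificate a K = true.
Proof.
  intros Ha Hi. set (c := scons (S i) a).
  destruct (psi_total c (fun _ => eq_refl)) as [t0 Ht0].
  destruct (first_nonzero_exists psi c t0 Ht0) as [t Ft].
  pose proof (psi_spec _ _ (fval_first_nonzero psi c t Ft)) as Hk.
  destruct (psi (prefix c t)) as [|[|m]] eqn:V.
  - unfold first_nonzero in Ft. now rewrite V in Ft.
  - change (prefix (retr a) (S i) = prefix x (S i)) in Hk.
    exfalso. apply Hi. rewrite <- (retract_fixes beta beta_spread (x_inF 0) a Ha i).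
    exact (prefix_eq_agree _ _ _ Hk i (le_n _)).
  - exists (certificate_code a (S i) t m). apply is_certificate_spec.
    now exists (S i), t, m.
Qed.

Definition embedding (a : baire) : baire := hit (is_certificate a).

Lemma embedding_apart_of_apart_x a d i :
  inF beta a -> inF beta d -> a i <> d i -> a i <> x i -> apart (embedding a) (embedding d).
Proof.
  intros Ha Hd Had Hax. apply hit_apart.
  - exact (certificate_exists a i Ha Hax).
  - intros K Ca Cd. apply Had. symmetry. exact (certificate_unique a d K Ha Hd Ca Cd i).
Qed.

Lemma embedding_apart a d :
  inF beta a -> inF beta d -> apart a d -> apart (embedding a) (embedding d).
Proof.
  intros Ha Hd [i Hi]. destruct (Nat.eq_dec (a i) (x i)) as [E|E].
  - apply apart_sym, (embedding_apart_of_apart_x d a i); auto; congruence.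
  - exact (embedding_apart_of_apart_x a d i Ha Hd Hi E).
Qed.

End Embedding.

Lemma spread_embeds_T2 (bcp : BCP) (ac : AC10) beta :
  Spr beta -> models_sentence (inF beta) -> embeds beta inT2.
Proof.
  intros Hspr [x [Hx [_ Hsep]]].
  destruct (ac _ (modulus_choice_total beta Hspr x Hx Hsep bcp)) as [psi [Htot Hspec]].
  apply (embeds_of_causal beta inT2 (embedding psi)).
  - apply hit_causal, is_certificate_causal.
  - intros a _. apply hit_T2.
  - intros a d. apply (embedding_apart beta Hspr x Hx psi Htot Hspec).
Qed.

Theorem theorem6p6 :
  BCP -> AC10 -> AC01 ->
  models_sentence inT2 /\
  (forall beta : list nat -> nat,
     Spr beta -> models_sentence (inF beta) -> embeds beta inT2).
Proof.
  intros bcp ac _. split.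
  - exact (T2_models_sentence bcp).
  - exact (spread_embeds_T2 bcp ac).
Qed.
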